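(* Let $\mathcal{D}$ be the set of density operators on a finite-dimensional Hilbert space, with trace distance $d(\rho,\sigma)=\frac12\|\rho-\sigma\|_1$. Let $S_1\subseteq S_2\subseteq\cdots$ be closed convex subsets of $\mathcal{D}$, and let $V\subseteq\mathcal{D}$ be a set such that for every $\sigma\in V$ and every $\varepsilon>0$ there exist $N$ and $\eta\in S_N$ with $d(\sigma,\eta)<\varepsilon$. Let $\kappa\in V$ be such that for some $\delta>0$ every Hermitian unit-trace operator $\omega$ with $\|\omega-\kappa\|_1\le\delta$ is a density operator belonging to $V$. Then $\kappa\in S_n$ for some $n$. *)

(* operators on the n-dimensional Hilbert space C^n are
   n x n matrices over C = R[i] (complex numbers over a realType R). *)
From HB Require Import structures.
From mathcomp Require Import all_boot all_order all_algebra.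
From mathcomp Require Import reals.
From mathcomp.real_closed Require Import complex.

Set Implicit Arguments.
Unset Strict Implicit.
Unset Printing Implicit Defensive.

Import Order.TTheory GRing.Theory Num.Theory.
Local Open Scope ring_scope.
Local Open Scope complex_scope.

Definition adjmx (R : realType) (m p : nat) (A : 'M[R[i]]_(m, p)) : 'M[R[i]]_(p, m) :=
  map_mx Num.conj (A^T).

Definition hermitian_op (R : realType) (n : nat) (A : 'M[R[i]]_n) : Prop :=
  adjmx A = A.

(* positive semidefinite: Hermitian and x^* A x >= 0 for every vector x
   (x is written as the column adjmx v of a row vector v) *)
Definition psd (R : realType) (n : nat) (A : 'M[R[i]]_n) : Prop :=
  hermitian_op A /\ forall v : 'rV[R[i]]_n, 0 <= (v *m A *m adjmx v) 0 0.

Definition density (R : realType) (n : nat) (A : 'M[R[i]]_n) : Prop :=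
  psd A /\ \tr A = 1.

(* trace norm ||X||_1 = tr |X| = tr sqrt(X^* X), i.e. the sum of the square
   roots of the eigenvalues of X^* X (spectral decomposition of the
   Hermitian matrix X^* X, from mathcomp's spectral.v) *)
Definition trnorm (R : realType) (n : nat) (X : 'M[R[i]]_n) : R[i] :=
  \sum_(i < n) sqrtC (spectral_diag (adjmx X *m X) 0 i).

Definition trdist (R : realType) (n : nat) (rho sigma : 'M[R[i]]_n) : R[i] :=
  trnorm (rho - sigma) / 2.

Definition convex_set (R : realType) (n : nat) (S : 'M[R[i]]_n -> Prop) : Prop :=
  forall (rho sigma : 'M[R[i]]_n) (t : R),
    S rho -> S sigma -> 0 <= t <= 1 ->
    S (t%:C *: rho + (1 - t)%:C *: sigma).

Definition closed_set (R : realType) (n : nat) (S : 'M[R[i]]_n -> Prop) : Prop :=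
  forall rho : 'M[R[i]]_n,
    (forall eps : R, 0 < eps -> exists sigma, S sigma /\ trdist rho sigma < eps%:C) ->
    S rho.

From HB Require Import structures.
From mathcomp Require Import all_boot all_order all_algebra.
From mathcomp Require Import reals.
From mathcomp.real_closed Require Import complex.
From mathcomp Require Import ring lra.

(* Since kappa is interior to V relative to the Hermitian unit-trace matrices, V contains
   the cross-polytope with vertices kappa +- r B_t, where the B_t (projections of the
   matrix units E_ij and 'i E_ij) span the traceless Hermitian matrices. Each vertex is
   approximated to within a small error by a point of some S_N, and by monotonicity all of
   them by points of a single S_N. On the segment joining the approximants of two opposite
   vertices choose the point with parameter t; the parameters making kappa the barycenter
   of these points solve a linear system that is a perturbation of size at most 1/2 of a
   diagonal one, so they exist and lie in [0, 1]. Convexity of S_N then puts kappa in S_N. *)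

Set Implicit Arguments.
Unset Strict Implicit.
Unset Printing Implicit Defensive.

Import Order.TTheory GRing.Theory Num.Theory.
Local Open Scope ring_scope.
Local Open Scope complex_scope.

Section SumBounds.
Variable R : numDomainType.

Lemma ler_sum_term (I : finType) (F : I -> R) i :
  (forall j, 0 <= F j) -> F i <= \sum_j F j.
Proof. by move=> F_ge0; rewrite (bigD1 i) //= lerDl sumr_ge0. Qed.

Lemma sum_sqr_le_sqr_sum (I : finType) (F : I -> R) :
  (forall j, 0 <= F j) -> \sum_j F j ^+ 2 <= (\sum_j F j) ^+ 2.
Proof.
move=> F_ge0; rewrite expr2 mulr_suml; apply: ler_sum => i _.
by rewrite mulr_sumr expr2 ler_sum_term // => j; rewrite mulr_ge0.
Qed.

End SumBounds.

Section Adjoint.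
Variable R : realType.
Local Notation C := R[i].

Lemma conjC_real (x : R) : Num.conj (x%:C : C) = x%:C.
Proof. by rewrite /Num.conj /= oppr0. Qed.

Lemma normc_real (x : R) : `|x%:C : C| = (`|x|)%:C.
Proof. by rewrite normc_def /= expr0n /= addr0 sqrtr_sqr. Qed.

Lemma adjmxK m p (X : 'M[C]_(m, p)) : adjmx (adjmx X) = X.
Proof. by apply/matrixP=> i j; rewrite !mxE conjCK. Qed.

Lemma adjmxM m p q (X : 'M[C]_(m, p)) (Y : 'M[C]_(p, q)) :
  adjmx (X *m Y) = adjmx Y *m adjmx X.
Proof. by rewrite /adjmx trmx_mul map_mxM. Qed.

Lemma adjmxD m p (X Y : 'M[C]_(m, p)) : adjmx (X + Y) = adjmx X + adjmx Y.
Proof. by apply/matrixP=> i j; rewrite !mxE rmorphD. Qed.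

Lemma adjmxN m p (X : 'M[C]_(m, p)) : adjmx (- X) = - adjmx X.
Proof. by apply/matrixP=> i j; rewrite !mxE rmorphN. Qed.

Lemma adjmx_scaleR m p (c : R) (X : 'M[C]_(m, p)) :
  adjmx (c%:C *: X) = c%:C *: adjmx X.
Proof. by apply/matrixP=> i j; rewrite !mxE rmorphM /= conjC_real. Qed.

Lemma mxtrace_adjmx n (X : 'M[C]_n) : \tr (adjmx X) = Num.conj (\tr X).
Proof. by rewrite /mxtrace rmorph_sum; apply: eq_bigr => i _; rewrite !mxE. Qed.

Lemma hermitianD n (X Y : 'M[C]_n) :
  hermitian_op X -> hermitian_op Y -> hermitian_op (X + Y).
Proof. by rewrite /hermitian_op adjmxD => -> ->. Qed.

Lemma hermitianB n (X Y : 'M[C]_n) :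
  hermitian_op X -> hermitian_op Y -> hermitian_op (X - Y).
Proof. by rewrite /hermitian_op adjmxD adjmxN => -> ->. Qed.

Lemma hermitian_scaleR n (c : R) (X : 'M[C]_n) :
  hermitian_op X -> hermitian_op (c%:C *: X).
Proof. by rewrite /hermitian_op adjmx_scaleR => ->. Qed.

End Adjoint.

Section TraceNorm.
Variable R : realType.
Local Notation C := R[i].
Local Open Scope sesquilinear_scope.

Lemma adjmx_mul_normal n (X : 'M[C]_n) : (adjmx X *m X) \is normalmx.
Proof.
apply/normalmxP; have -> // : (adjmx X *m X)^t* = adjmx X *m X.
by rewrite -[_^t*]/(adjmx _) adjmxM adjmxK.
Qed.

Lemma adjmx_mul_diag m n (Y : 'M[C]_(m, n)) i :
  (adjmx Y *m Y) i i = \sum_k `|Y k i| ^+ 2.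
Proof. by rewrite !mxE; apply: eq_bigr => k _; rewrite !mxE normCK mulrC. Qed.

Lemma mxtrace_adjmx_mul m n (Y : 'M[C]_(m, n)) :
  \tr (adjmx Y *m Y) = \sum_i \sum_k `|Y k i| ^+ 2.
Proof. by apply: eq_bigr => i _; rewrite adjmx_mul_diag. Qed.

(* Conjugating by the unitary spectral basis P, an eigenvalue of X^* X is a diagonal
   entry of Y^* Y with Y = X P^*, i.e. a sum of squared moduli. *)
Lemma spectral_diag_adjmx_mul_ge0 n (X : 'M[C]_n) i :
  0 <= spectral_diag (adjmx X *m X) 0 i.
Proof.
set N := adjmx X *m X; set P := spectralmx N.
have /orthomx_spectralP N_diag : N \is normalmx := adjmx_mul_normal X.
have P_unit : P \in unitmx := spectral_unit N.
have -> : spectral_diag N 0 i = (P *m N *m P^t*) i i.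
  rewrite -invmx_unitary ?spectral_unitarymx // [in RHS]N_diag !mulmxA mulmxV //.
  by rewrite mul1mx -mulmxA mulmxV // mulmx1 mxE eqxx mulr1n.
have -> : P *m N *m P^t* = adjmx (X *m P^t*) *m (X *m P^t*).
  by rewrite adjmxM -[P^t*]/(adjmx P) adjmxK !mulmxA.
by rewrite adjmx_mul_diag; apply: sumr_ge0 => k _; rewrite exprn_ge0.
Qed.

Lemma sum_spectral_diag_adjmx_mul n (X : 'M[C]_n) :
  \sum_i spectral_diag (adjmx X *m X) 0 i = \sum_i \sum_k `|X k i| ^+ 2.
Proof.
set N := adjmx X *m X; rewrite -mxtrace_adjmx_mul -/N.
have /orthomx_spectralP {2}-> : N \is normalmx := adjmx_mul_normal X.
by rewrite mxtrace_mulC mulmxA mulmxV ?spectral_unit // mul1mx mxtrace_diag.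
Qed.

Lemma sqrt_spectral_diag_ge0 n (X : 'M[C]_n) i :
  0 <= sqrtC (spectral_diag (adjmx X *m X) 0 i).
Proof. by rewrite sqrtC_ge0 spectral_diag_adjmx_mul_ge0. Qed.

Lemma trnorm_ge0 n (X : 'M[C]_n) : 0 <= trnorm X.
Proof. by apply: sumr_ge0 => i _; rewrite sqrt_spectral_diag_ge0. Qed.

Lemma trnormN n (X : 'M[C]_n) : trnorm (- X) = trnorm X.
Proof. by rewrite /trnorm adjmxN mulNmx mulmxN opprK. Qed.

(* ||X||_1^2 >= sum of the eigenvalues of X^* X = sum_(k,l) |X k l|^2 >= |X k l|^2 *)
Lemma trnorm_ge_entry n (X : 'M[C]_n) k l : `|X k l| <= trnorm X.
Proof.
rewrite -(ler_pXn2r (isT : (0 < 2)%N)) ?nnegrE ?trnorm_ge0 //.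
apply: le_trans (sum_sqr_le_sqr_sum (sqrt_spectral_diag_ge0 X)).
under eq_bigr => i _ do rewrite sqrtCK.
rewrite sum_spectral_diag_adjmx_mul.
apply: le_trans (ler_sum_term l _); last by move=> j; apply: sumr_ge0 => k' _; rewrite exprn_ge0.
by apply: ler_sum_term => j; rewrite exprn_ge0.
Qed.

Lemma trnorm_le_entry_bound n (X : 'M[C]_n) (b : C) : 0 <= b ->
  (forall k l, `|X k l| <= b) -> trnorm X <= n%:R ^+ 2 * b.
Proof.
move=> b_ge0 X_le_b; have nb_ge0 : 0 <= n%:R * b by rewrite mulr_ge0.
have tr_le : \tr (adjmx X *m X) <= (n%:R * b) ^+ 2.
  have -> : (n%:R * b) ^+ 2 = \sum_(i < n) \sum_(k < n) b ^+ 2.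
    by rewrite !sumr_const !card_ord; ring.
  rewrite mxtrace_adjmx_mul; apply: ler_sum => i _; apply: ler_sum => k _.
  by rewrite ler_pXn2r ?nnegrE.
have eig_le i : sqrtC (spectral_diag (adjmx X *m X) 0 i) <= n%:R * b.
  rewrite -(sqrCK nb_ge0) ler_sqrtC ?nnegrE ?spectral_diag_adjmx_mul_ge0 ?exprn_ge0 //.
  apply: le_trans tr_le; rewrite mxtrace_adjmx_mul -sum_spectral_diag_adjmx_mul.
  exact/ler_sum_term/spectral_diag_adjmx_mul_ge0.
apply: le_trans (ler_sum _ (fun i _ => eig_le i)) _.
by rewrite sumr_const card_ord -[leLHS]mulr_natl mulrA -expr2.
Qed.

End TraceNorm.

Section TracelessHermitian.
Context {R : realType} {n : nat}.
Local Notation C := R[i].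
Local Notation T := ('I_n * 'I_n * bool)%type.

(* [rbasis (i, j, false) = E_ij] and [rbasis (i, j, true) = 'i E_ij]: a basis of
   M_n(C) as a real vector space, with coordinates [rcoord]. *)
Definition rbasis (t : T) : 'M[C]_n :=
  (if t.2 then 'i else 1) *: delta_mx t.1.1 t.1.2.

Definition rcoord (t : T) (X : 'M[C]_n) : R :=
  if t.2 then complex.Im (X t.1.1 t.1.2) else complex.Re (X t.1.1 t.1.2).

Lemma sum_rcoord_rbasis (X : 'M[C]_n) : \sum_t (rcoord t X)%:C *: rbasis t = X.
Proof.
pose F t := (rcoord t X)%:C *: rbasis t.
rewrite (eq_bigr (fun t => F (t.1, t.2))); last by case.
rewrite -(pair_bigA _ (fun p b => F (p, b))) -(pair_bigA _ (fun i j => \sum_b F (i, j, b))).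
rewrite [RHS]matrix_sum_delta; apply: eq_bigr => i _; apply: eq_bigr => j _.
rewrite big_bool /F /rcoord /rbasis /= !scalerA mulr1 -scalerDl; congr (_ *: _).
by rewrite [RHS]complexE addrC mulrC.
Qed.

Lemma rcoord_le_entry t (X : 'M[C]_n) : (`|rcoord t X|)%:C <= `|X t.1.1 t.1.2|.
Proof.
rewrite /rcoord; case: t.2; last exact: normc_ge_Re.
have := normc_ge_Re (X t.1.1 t.1.2 * 'i).
by rewrite ReiNIm normrN normrM normCi mulr1.
Qed.

Lemma rbasis_entry_le t i j : `|rbasis t i j| <= 1.
Proof.
rewrite !mxE normrM.
have -> : `|(if t.2 then 'i else 1) : C| = 1.
  by case: t.2; rewrite ?normr1 ?normCi.
by rewrite mul1r; case: (_ && _); rewrite ?normr1 ?normr0 ?ler01.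
Qed.

(* The orthogonal projection of M_n(C) onto the traceless Hermitian matrices;
   it is real-linear but not complex-linear. *)
Definition htproj (X : 'M[C]_n) : 'M[C]_n :=
  2^-1 *: (X + adjmx X) - ((\tr X + \tr (adjmx X)) / (2 * n%:R)) *: 1%:M.

Lemma htprojD (X Y : 'M[C]_n) : htproj (X + Y) = htproj X + htproj Y.
Proof. by rewrite /htproj adjmxD !mxtraceD; apply/matrixP=> i j; rewrite !mxE; ring. Qed.

Lemma htprojZ (c : R) (X : 'M[C]_n) : htproj (c%:C *: X) = c%:C *: htproj X.
Proof. by rewrite /htproj adjmx_scaleR !mxtraceZ; apply/matrixP=> i j; rewrite !mxE; ring. Qed.

Lemma htproj_sum (I : finType) (c : I -> R) (Y : I -> 'M[C]_n) :
  htproj (\sum_i (c i)%:C *: Y i) = \sum_i (c i)%:C *: htproj (Y i).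
Proof.
elim/big_rec2: _ => [|i X Z _ IH]; last by rewrite htprojD htprojZ IH.
by have := htprojZ 0 0; rewrite !scale0r.
Qed.

Lemma htproj_id (X : 'M[C]_n) : hermitian_op X -> \tr X = 0 -> htproj X = X.
Proof.
move=> X_herm X_tr; rewrite /htproj X_herm X_tr add0r mul0r scale0r subr0.
by apply/matrixP=> i j; rewrite !mxE; field.
Qed.

Lemma htproj_herm (X : 'M[C]_n) : hermitian_op (htproj X).
Proof.
rewrite /hermitian_op /htproj; apply/matrixP=> i j; rewrite !mxE mxtrace_adjmx.
rewrite !(rmorphB, rmorphM, rmorphD, fmorphV, rmorph_nat, rmorph1) /= !conjCK eq_sym.
ring.
Qed.

Hypothesis n_gt0 : (0 < n)%N.

Lemma htproj_tr (X : 'M[C]_n) : \tr (htproj X) = 0.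
Proof.
rewrite /htproj raddfB /= !mxtraceZ mxtrace1 mxtraceD.
have n_neq0 : (n%:R : C) != 0 by rewrite pnatr_eq0 -lt0n.
by field.
Qed.

Lemma norm_mxtrace_le (X : 'M[C]_n) : (forall i j, `|X i j| <= 1) -> `|\tr X| <= n%:R.
Proof.
move=> X_le1; apply: le_trans (ler_norm_sum _ _ _) _.
by apply: le_trans (ler_sum _ (fun i _ => X_le1 i i)) _; rewrite sumr_const card_ord.
Qed.

Lemma htproj_entry_le (X : 'M[C]_n) :
  (forall i j, `|X i j| <= 1) -> forall i j, `|htproj X i j| <= 2.
Proof.
move=> X_le1 i j; rewrite !mxE.
apply: le_trans (ler_normB _ _) _; rewrite [leRHS](_ : 2 = 1 + 1) //; apply: lerD.
  rewrite normrM normfV normr_nat ler_pdivrMl ?ltr0n // mulr1.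
  by apply: le_trans (ler_normD _ _) _; rewrite norm_conjC; apply: lerD.
rewrite normrM -[leRHS]mulr1; apply: ler_pM; rewrite ?normr_ge0 //; last first.
  by case: (i == j); rewrite ?normr1 ?normr0 ?ler01.
rewrite normrM normfV normrM !normr_nat ler_pdivrMr ?mulr_gt0 ?ltr0n // mul1r.
apply: le_trans (ler_normD _ _) _; rewrite mxtrace_adjmx norm_conjC.
have tr_le := norm_mxtrace_le X_le1.
by apply: le_trans (lerD tr_le tr_le) _; rewrite -mulr2n mulr_natl.
Qed.

Definition htbasis (t : T) : 'M[C]_n := htproj (rbasis t).

Lemma htbasis_herm t : hermitian_op (htbasis t).
Proof. exact: htproj_herm. Qed.

Lemma htbasis_tr t : \tr (htbasis t) = 0.
Proof. exact: htproj_tr. Qed.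

Lemma trnorm_scale_htbasis_le (c : R) t :
  trnorm (c%:C *: htbasis t) <= (n%:R ^+ 2 * (2 * `|c|))%:C.
Proof.
rewrite rmorphM rmorphXn rmorph_nat /=; apply: trnorm_le_entry_bound => [|i j].
  by rewrite lecR mulr_ge0.
rewrite mxE normrM normc_real rmorphM /= rmorph_nat mulrC ler_wpM2r ?lecR //.
exact/htproj_entry_le/rbasis_entry_le.
Qed.

Lemma herm_traceless_coord (X : 'M[C]_n) : hermitian_op X -> \tr X = 0 ->
  exists d : 'I_#|{: T}| -> R, X = \sum_l (d l)%:C *: htbasis (enum_val l) /\
                               forall l, (`|d l|)%:C <= trnorm X.
Proof.
move=> X_herm X_tr; exists (fun l => rcoord (enum_val l) X); split => [|l].
  rewrite -(big_enum_val (A := xpredT) (fun t => (rcoord t X)%:C *: htbasis t)) /=.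
  by rewrite -htproj_sum sum_rcoord_rbasis htproj_id.
exact: le_trans (rcoord_le_entry _ _) (trnorm_ge_entry _ _ _).
Qed.
End TracelessHermitian.

Section CrossPolytopeBalance.
Variable R : realFieldType.

Lemma fixpoint_norm_le m (M : 'M[R]_m) (a y : 'rV[R]_m) (c : R) :
  (forall l, \sum_k `|M k l| <= 2^-1) -> (forall l, `|a 0 l| <= c) ->
  y = a + y *m M -> forall l, `|y 0 l| <= 2 * c.
Proof.
case: m M a y => [|m] M a y M_le a_le y_fix l; first by case: l.
have [k0 _ k0_max] := @arg_maxP _ _ _ ord0 xpredT (fun k => `|y 0 k|) isT.
apply: le_trans (k0_max l isT) _.
suff : `|y 0 k0| <= c + `|y 0 k0| * 2^-1 by lra.
rewrite {1}y_fix !mxE; apply: le_trans (ler_normD _ _) (lerD (a_le k0) _).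
apply: le_trans (ler_norm_sum _ _ _) _.
apply: le_trans (_ : \sum_k `|y 0 k0| * `|M k k0| <= _); last first.
  by rewrite -mulr_sumr ler_wpM2l.
by apply: ler_sum => k _; rewrite normrM ler_wpM2r //; apply: k0_max.
Qed.

Lemma exists_fixpoint m (M : 'M[R]_m) (a : 'rV[R]_m) (c : R) :
  (forall l, \sum_k `|M k l| <= 2^-1) -> (forall l, `|a 0 l| <= c) ->
  exists y : 'rV[R]_m, y = a + y *m M /\ forall l, `|y 0 l| <= 2 * c.
Proof.
move=> M_le a_le; set A := 1%:M - M.
have A_unit : A \in unitmx.
  rewrite unitmxE unitfE; apply/negP => /det0P [v v_neq0].
  rewrite /A mulmxBr mulmx1 => /eqP; rewrite subr_eq0 => /eqP v_fix.
  have v_le := @fixpoint_norm_le _ M 0 v 0 M_le.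
  move/eqP: v_neq0; apply; apply/rowP => l; apply/eqP; rewrite mxE -normr_le0.
  by rewrite -(mulr0 2) v_le ?add0r // => l'; rewrite mxE normr0.
have y_fix : a *m invmx A = a + (a *m invmx A) *m M.
  apply/eqP; rewrite -subr_eq0 opprD addrA addrAC -{1}[a *m invmx A]mulmx1 -mulmxBr.
  by rewrite -/A mulmxKV // subrr.
by exists (a *m invmx A); split => //; apply: fixpoint_norm_le y_fix.
Qed.

Lemma cross_polytope_balance m (r c : R) (d : 'I_m -> bool -> 'I_m -> R) :
  0 < r -> 2 * m%:R * c <= r -> (forall k s l, `|d k s l| <= c) ->
  exists t : 'I_m -> R, (forall k, 0 <= t k <= 1) /\
    forall l, (2 * t l - 1) * r + \sum_k (t k * d k true l + (1 - t k) * d k false l) = 0.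
Proof.
move=> r_gt0 mc_le_r d_le; have r_neq0 : r != 0 by rewrite gt_eqF.
have sum_le (F : 'I_m -> R) :
    (forall k, `|F k| <= 2 * c) -> \sum_k `|F k / (2 * r)| <= 2^-1.
  move=> F_le; apply: le_trans (_ : \sum_(k < m) c / r <= _).
    apply: ler_sum => k _; rewrite normrM normfV (gtr0_norm (_ : 0 < 2 * r)) ?mulr_gt0 //.
    by rewrite ler_pdivrMr ?mulr_gt0 // (_ : c / r * (2 * r) = 2 * c) //; field.
  by rewrite sumr_const card_ord -[leLHS]mulr_natl mulrA ler_pdivrMr //; lra.
(* With [y := 2 t - 1] the balance equations read [y = a + y *m M]. *)
pose M := \matrix_(k, l) ((d k false l - d k true l) / (2 * r)).
pose a := \row_l \sum_k (- (d k true l + d k false l) / (2 * r)).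
have d2_le k l : `|d k false l| + `|d k true l| <= 2 * c.
  by rewrite mulr_natl mulr2n; apply: lerD.
have M_le l : \sum_k `|M k l| <= 2^-1.
  under eq_bigr do rewrite mxE.
  by apply: sum_le => k; apply: le_trans (ler_normB _ _) (d2_le k l).
have a_le l : `|a 0 l| <= 2^-1.
  rewrite mxE; apply: le_trans (ler_norm_sum _ _ _) _; apply: sum_le => k.
  by rewrite normrN addrC; apply: le_trans (ler_normD _ _) (d2_le k l).
have [y [y_fix y_le]] := exists_fixpoint M_le a_le.
exists (fun k => (1 + y 0 k) / 2); split => [k | l].
  by have := y_le k; rewrite mulfV ?pnatr_eq0 // ler_norml; lra.
rewrite (_ : 2 * ((1 + y 0 l) / 2) - 1 = y 0 l); last by field.
rewrite {1}y_fix !mxE mulrDl mulr_suml mulr_suml -!big_split /=.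
by apply: big1 => k _; rewrite !mxE; field.
Qed.
End CrossPolytopeBalance.

Section ConvexCombinations.
Variables (R : realType) (n : nat) (S : 'M[R[i]]_n -> Prop).
Local Notation C := R[i].
Hypothesis S_convex : convex_set S.

Lemma convex_set_comb m (p : 'I_m -> R) (z : 'I_m -> 'M[C]_n) :
  (forall k, 0 <= p k) -> \sum_k p k = 1 -> (forall k, S (z k)) ->
  S (\sum_k (p k)%:C *: z k).
Proof.
elim: m p z => [|m IH] p z p_ge0 p_sum Sz.
  by move: p_sum; rewrite big_ord0 => /eqP; rewrite eq_sym oner_eq0.
rewrite big_ord_recr /=; move: p_sum; rewrite big_ord_recr /=.
set w := widen_ord (leqnSn m); set s := \sum_i p (w i) => p_sum.
have s_ge0 : 0 <= s by apply: sumr_ge0 => i _; exact: p_ge0.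
have -> : p ord_max = 1 - s by rewrite -p_sum addrC addrK.
have [s0 | s_neq0] := eqVneq s 0.
  have pw0 i : p (w i) = 0.
    by apply: (psumr_eq0P (P := xpredT) (F := fun i => p (w i))) => // j _; exact: p_ge0.
  rewrite big1 => [|i _]; last by rewrite pw0 scale0r.
  by rewrite add0r s0 subr0 scale1r.
have -> : \sum_(i < m) (p (w i))%:C *: z (w i) =
          s%:C *: \sum_(i < m) (p (w i) / s)%:C *: z (w i).
  by rewrite scaler_sumr; apply: eq_bigr => i _; rewrite scalerA -rmorphM /= mulrC divfK.
apply: S_convex; last by rewrite s_ge0 -p_sum lerDl p_ge0.
  by apply: IH => // [k | ]; [rewrite divr_ge0 ?p_ge0 | rewrite -mulr_suml mulfV].
exact: Sz.
Qed.

Lemma convex_comb_cross_pair m (kappa : 'M[C]_n) (B : 'I_m -> 'M[C]_n) k (r t : R)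
    (a b : 'I_m -> R) :
  t%:C *: (kappa + r%:C *: B k + \sum_l (a l)%:C *: B l) +
    (1 - t)%:C *: (kappa + (- r)%:C *: B k + \sum_l (b l)%:C *: B l) =
  kappa + ((2 * t - 1) * r)%:C *: B k + \sum_l (t * a l + (1 - t) * b l)%:C *: B l.
Proof.
apply/matrixP => i j; rewrite !mxE !summxE [in RHS](eq_bigr (fun l =>
  t%:C * ((a l)%:C * B l i j) + (1 - t)%:C * ((b l)%:C * B l i j))) => [|l _]; last first.
  by rewrite !mxE rmorphD !rmorphM /= mulrDl !mulrA.
rewrite big_split -!mulr_sumr /=.
under eq_bigr do rewrite mxE.
under [in X in _ + (_ * X)]eq_bigr do rewrite mxE.
by rewrite !(rmorphM, rmorphB, rmorphN, rmorph1, rmorph_nat) /=; ring.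
Qed.

Lemma convex_mem_of_near_cross_polytope m (kappa : 'M[C]_n) (B : 'I_m -> 'M[C]_n)
    (eta : 'I_m -> bool -> 'M[C]_n) (r c : R) :
  (0 < m)%N -> 0 < r -> 2 * m%:R * c <= r -> (forall k s, S (eta k s)) ->
  (forall k s, exists2 d : 'I_m -> R,
     eta k s = kappa + (if s then r else - r)%:C *: B k + \sum_l (d l)%:C *: B l &
     forall l, `|d l| <= c) ->
  S kappa.
Proof.
move=> m_gt0 r_gt0 mc_le_r S_eta eta_near.
have /fin_all_exists [d dP] : forall ks : 'I_m * bool, exists d : 'I_m -> R,
    eta ks.1 ks.2 = kappa + (if ks.2 then r else - r)%:C *: B ks.1 + \sum_l (d l)%:C *: B l
    /\ forall l, `|d l| <= c.
  by move=> [k s]; have [d ? ?] := eta_near k s; exists d.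
have [t [t01 t_bal]] :=
  cross_polytope_balance (d := fun k s => d (k, s)) r_gt0 mc_le_r (fun k s => (dP (k, s)).2).
pose z k := (t k)%:C *: eta k true + (1 - t k)%:C *: eta k false.
have zE k : z k = kappa + ((2 * t k - 1) * r)%:C *: B k +
    \sum_l (t k * d (k, true) l + (1 - t k) * d (k, false) l)%:C *: B l.
  by rewrite /z (dP (k, true)).1 (dP (k, false)).1 convex_comb_cross_pair.
have sum_z : \sum_k z k = kappa *+ m.
  rewrite (eq_bigr _ (fun k _ => zE k)) !big_split /= sumr_const card_ord -addrA.
  rewrite exchange_big /= -[RHS]addr0; congr (_ + _).
  under [X in _ + X]eq_bigr do rewrite -scaler_suml -rmorph_sum.
  rewrite -big_split /= big1 // => l _.
  by rewrite -scalerDl -rmorphD t_bal scale0r.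
have m_neq0 : (m%:R : R) != 0 by rewrite pnatr_eq0 -lt0n.
have -> : kappa = \sum_k (m%:R^-1)%:C *: z k.
  rewrite -scaler_sumr sum_z -scaler_nat scalerA fmorphV rmorph_nat.
  by rewrite mulVf ?scale1r // pnatr_eq0 -lt0n.
apply: convex_set_comb => [k | | k]; first by rewrite invr_ge0 ler0n.
  by rewrite sumr_const card_ord -[_ *+ m]mulr_natl mulfV.
exact: S_convex.
Qed.
End ConvexCombinations.

Lemma approx_at_common_index (T : eqType) (S : nat -> T -> Prop) (I : finType)
    (P : I -> T -> Prop) :
  (forall k x, S k x -> S k.+1 x) -> (forall i, exists N x, S N x /\ P i x) ->
  exists N (x : I -> T), forall i, S N (x i) /\ P i (x i).
Proof.
move=> S_mono /(_ _) approx.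
have S_le k l x : (k <= l)%N -> S k x -> S l x.
  by move=> /subnK <-; elim: (l - k)%N => // j IH /IH /S_mono.
have /fin_all_exists [Nx Nx_ok] : forall i, exists Nx : nat * T, S Nx.1 Nx.2 /\ P i Nx.2.
  by move=> i; have [N [x ?]] := approx i; exists (N, x).
exists (\max_i (Nx i).1), (fun i => (Nx i).2) => i; have [SNx PNx] := Nx_ok i.
by split => //; apply: S_le SNx; apply: (leq_bigmax (F := fun i => (Nx i).1)).
Qed.

Lemma mxtrace_eq1_dim_gt0 (R : nzRingType) n (A : 'M[R]_n) : \tr A = 1 -> (0 < n)%N.
Proof. by case: n A => // A; rewrite /mxtrace big_ord0 => /eqP; rewrite eq_sym oner_eq0. Qed.

Section HermitianCrossPolytope.
Context {R : realType} {n : nat}.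
Local Notation C := R[i].
Local Notation T := ('I_n * 'I_n * bool)%type.

Lemma hermitian_add_htbasis (X : 'M[C]_n) (c : R) t :
  hermitian_op X -> hermitian_op (X + c%:C *: htbasis t).
Proof. by move=> X_herm; apply/hermitianD/hermitian_scaleR/htbasis_herm. Qed.

Lemma mxtrace_add_htbasis (X : 'M[C]_n) (c : R) t :
  (0 < n)%N -> \tr (X + c%:C *: htbasis t) = \tr X.
Proof. by move=> n_gt0; rewrite mxtraceD mxtraceZ htbasis_tr // mulr0 addr0. Qed.

Lemma card_htbasis_index_gt0 : (0 < n)%N -> (0 < #|{: T}|)%N.
Proof. by move=> n_gt0; rewrite !card_prod !card_ord card_bool !muln_gt0 n_gt0. Qed.

Lemma convex_mem_of_near_htbasis_cross_polytope (S : 'M[C]_n -> Prop) (kappa : 'M[C]_n)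
    (r : R) (eta : T -> bool -> 'M[C]_n) :
  convex_set S -> (forall rho, S rho -> density rho) ->
  hermitian_op kappa -> \tr kappa = 1 -> 0 < r ->
  (forall t s, S (eta t s)) ->
  (forall t s, trdist (kappa + (if s then r else - r)%:C *: htbasis t) (eta t s)
                 < (r / (4 * #|{: T}|%:R))%:C) ->
  S kappa.
Proof.
move=> S_convex S_density kappa_herm kappa_tr r_gt0 S_eta eta_near.
have n_gt0 := mxtrace_eq1_dim_gt0 kappa_tr.
pose m := #|{: T}|; pose c := r / (2 * m%:R).
have m_gt0 : (0 < m)%N := card_htbasis_index_gt0 n_gt0.
have mc_le_r : 2 * m%:R * c <= r.
  by rewrite /c (_ : 2 * m%:R * (r / (2 * m%:R)) = r) //; field; rewrite pnatr_eq0 -lt0n.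
apply: (convex_mem_of_near_cross_polytope S_convex (B := fun l => htbasis (enum_val l))
  (eta := fun k s => eta (enum_val k) s) m_gt0 r_gt0 mc_le_r) => // k s.
set w := kappa + _ *: _.
have [[eta_herm _] eta_tr] := S_density _ (S_eta (enum_val k) s).
have w_herm : hermitian_op w := hermitian_add_htbasis _ _ kappa_herm.
have w_tr : \tr w = 1 by rewrite mxtrace_add_htbasis.
have [|d [dE d_le]] := herm_traceless_coord (hermitianB eta_herm w_herm).
  by rewrite raddfB /= eta_tr w_tr subrr.
exists d => [|l]; first by rewrite -(subrK w (eta _ s)) dE addrC.
rewrite -lecR; apply: le_trans (d_le l) _.
have := eta_near (enum_val k) s; rewrite /trdist -opprB trnormN ltr_pdivrMr ?ltr0n // => /ltW.
suff -> : (r / (4 * m%:R))%:C * 2 = c%:C :> C by [].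
by rewrite /c !(rmorphM, fmorphV, rmorph_nat) /=; field; rewrite pnatr_eq0 -lt0n.
Qed.

End HermitianCrossPolytope.

Theorem mainTheorem8 (R : realType) (n : nat)
    (S : nat -> 'M[R[i]]_n -> Prop) (V : 'M[R[i]]_n -> Prop)
    (kappa : 'M[R[i]]_n) :
  (forall k rho, S k rho -> density rho) ->
  (forall k, closed_set (S k)) ->
  (forall k, convex_set (S k)) ->
  (forall k rho, S k rho -> S k.+1 rho) ->
  (forall sigma, V sigma -> density sigma) ->
  (forall sigma, V sigma -> forall eps : R, 0 < eps ->
     exists N eta, S N eta /\ trdist sigma eta < eps%:C) ->
  V kappa ->
  (exists delta : R, 0 < delta /\
     forall omega : 'M[R[i]]_n, hermitian_op omega -> \tr omega = 1 ->
       trnorm (omega - kappa) <= delta%:C -> density omega /\ V omega) ->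
  exists k, S k kappa.
Proof.
move=> S_density _ S_convex S_mono V_density V_approx V_kappa [delta [delta_gt0 ball]].
have [[kappa_herm _] kappa_tr] := V_density _ V_kappa.
have n_gt0 := mxtrace_eq1_dim_gt0 kappa_tr.
pose r := delta / (2 * n%:R ^+ 2).
have r_gt0 : 0 < r by rewrite divr_gt0 // mulr_gt0 // exprn_gt0 // ltr0n.
pose w t (s : bool) := kappa + (if s then r else - r)%:C *: htbasis t.
have V_w t s : V (w t s).
  apply: (ball _ (hermitian_add_htbasis _ _ kappa_herm) _ _).2.
    by rewrite mxtrace_add_htbasis.
  rewrite addrAC subrr add0r; apply: le_trans (trnorm_scale_htbasis_le n_gt0 _ _) _.
  rewrite (_ : `|_| = r); last by case: s; rewrite ?normrN gtr0_norm.
  rewrite lecR /r (_ : _ * (2 * _) = delta) //.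
  by field; rewrite pnatr_eq0 -lt0n.
pose eps := r / (4 * #|{: 'I_n * 'I_n * bool}|%:R).
have eps_gt0 : 0 < eps by rewrite divr_gt0 // mulr_gt0 // ltr0n card_htbasis_index_gt0.
have [N [eta eta_near]] :=
  approx_at_common_index (P := fun ts x => trdist (w ts.1 ts.2) x < eps%:C) S_mono
    (fun ts => V_approx _ (V_w ts.1 ts.2) _ eps_gt0).
exists N; apply: (convex_mem_of_near_htbasis_cross_polytope (eta := fun t s => eta (t, s))
  (S_convex N) (S_density N) kappa_herm kappa_tr r_gt0) => t s; by case: (eta_near (t, s)).
Qed.
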